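(* Let $d\in\mathbb{N}$, let $x_1^*$ denote the smallest zero of the Legendre polynomial $P_{d+1}(x)$, and define $z^*=\arccos|x_1^*|$. If $z>z^*$, then there exists no design on the rectangle $[z,\pi-z]\times(-\pi,\pi]$ whose information matrix in the spherical harmonic regression model of degree $d$ equals $I_{(d+1)^2}$.
   Context: Spherical harmonic functions: for $n\in\mathbb{N}_0$, $Y_n^0(\theta,\phi)=\sqrt{2n+1}\,P_n(\cos\theta)$ with $P_n$ the $n$-th Legendre polynomial (orthogonal w.r.t. Lebesgue measure on $[-1,1]$, $P_n(1)=1$); for $1\le m\le n$, $Y_n^m(\theta,\phi)=\sqrt{2(2n+1)\frac{(n-m)!}{(n+m)!}}\,P_n^m(\cos\theta)\cos(m\phi)$ and $Y_n^{-m}(\theta,\phi)=\sqrt{2(2n+1)\frac{(n-m)!}{(n+m)!}}\,P_n^m(\cos\theta)\sin(m\phi)$, where $P_n^m(x)=(-1)^m(1-x^2)^{m/2}\frac{d^m}{dx^m}P_n(x)$. The spherical harmonic regression model of degree $d$ has regression vector $f_d=(Y_0^0,Y_1^{-1},Y_1^0,Y_1^1,\dots,Y_d^{-d},\dots,Y_d^d)^T\in\mathbb{R}^{(d+1)^2}$. A design is a probability measure $\xi$ on $[0,\pi]\times(-\pi,\pi]$ (a design on a subset means one supported in that subset), with information matrix $M(\xi)=\int f_df_d^T\,d\xi$. *)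

From HB Require Import structures.
From mathcomp Require Import all_boot all_order all_algebra.
From mathcomp Require Import all_classical all_reals all_analysis.
Set Implicit Arguments. Unset Strict Implicit. Unset Printing Implicit Defensive.
Import Order.TTheory GRing.Theory Num.Theory.
Import numFieldNormedType.Exports.
Local Open Scope classical_set_scope.
Local Open Scope ring_scope.

Section SphericalHarmonics.
Variable R : realType.

Definition Legendre (n : nat) : {poly R} :=
  ((2 ^+ n * (n`!)%:R)^-1) *: ((('X ^+ 2 - 1) ^+ n)^`(n)).

Definition assocLegendre (n m : nat) (x : R) : R :=
  (-1) ^+ m * (Num.sqrt (1 - x ^+ 2)) ^+ m * ((Legendre n)^`(m)).[x].

Definition Ynm (n : nat) (m : int) (p : R * R) : R :=
  let th := p.1 in let ph := p.2 in
  let k := `|m|%N in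
  let c := Num.sqrt (2 * (2 * n%:R + 1) * ((n - k)`!)%:R / ((n + k)`!)%:R) in
  if m == 0 then Num.sqrt (2 * n%:R + 1) * (Legendre n).[cos th]
  else if (0 < m)%R then c * assocLegendre n k (cos th) * cos (k%:R * ph)
  else c * assocLegendre n k (cos th) * sin (k%:R * ph).

(* Index k in {0,..,(d+1)^2-1} of f_d corresponds to (n, m) with
   n^2 <= k < (n+1)^2 and m = k - n^2 - n, i.e. the ordering
   Y_0^0, Y_1^{-1}, Y_1^0, Y_1^1, ..., Y_d^{-d}, ..., Y_d^d. *)
Definition idx_n (d k : nat) : nat := (\max_(n < d.+1 | n ^ 2 <= k) n)%N.
Definition idx_m (d k : nat) : int := k%:Z - (idx_n d k ^ 2 + idx_n d k)%N%:Z.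

Definition fvec (d : nat) (k : 'I_((d.+1) ^ 2)) : R * R -> R :=
  Ynm (idx_n d k) (idx_m d k).

Definition info_matrix (d : nat) (xi : probability (R * R)%type R)
  : 'M[R]_((d.+1) ^ 2) :=
  \matrix_(i, j) Rintegral xi setT (fun p => fvec i p * fvec j p).

Definition rect (z : R) : set (R * R) :=
  [set p | z <= p.1 <= pi - z] `&` [set p | - pi < p.2 <= pi].

Definition design_on (A : set (R * R)) (xi : probability (R * R)%type R) : Prop :=
  xi A = 1%E.

End SphericalHarmonics.

(* If xi had identity information matrix, its zonal entries (m = 0) would give
   \int P_n(cos t) P_m(cos t) dxi = [n = m] / (2n + 1) for n, m <= d, so the
   functional L p := \int p(cos t) dxi agrees with half the integral over
   [-1, 1] on every product of two polynomials of degree <= d; the Legendre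
   integrals themselves follow from Rodrigues' formula by repeated integration
   by parts.  Since P_{d+1} is even or odd, -x1 is a root as well and
   P_{d+1} = r (X^2 - x1^2) with deg r < d.  Writing r^2 (X^2 - x1^2) as
   (X r)^2 - x1^2 r^2 gives L (r^2 (X^2 - x1^2)) = 1/2 \int r P_{d+1} = 0,
   while L (r^2) > 0.  On the rectangle |cos t| <= cos z < |x1|, hence
   0 <= L (r^2 (cos^2 z - X^2)) = (cos^2 z - x1^2) L (r^2) < 0. *)
From HB Require Import structures.
From mathcomp Require Import all_boot all_order all_algebra.
From mathcomp Require Import all_classical all_reals all_analysis.
From mathcomp Require Import measurable_realfun ring lra zify.
Set Implicit Arguments. Unset Strict Implicit. Unset Printing Implicit Defensive.
Import Order.TTheory GRing.Theory Num.Theory.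
Import numFieldNormedType.Exports.
Local Open Scope classical_set_scope.
Local Open Scope ring_scope.

Lemma derivn_exp_factor (R : comNzRingType) (A : {poly R}) n k : (k <= n)%N ->
  exists s : {poly R}, (A ^+ n)^`(k) = A ^+ (n - k) * s.
Proof.
elim: k => [|k IHk] le_kn; first by exists 1; rewrite subn0 mulr1.
have [s Ds] := IHk (ltnW le_kn); rewrite derivnS Ds -(subnSK le_kn).
exists (A^`() * s *+ (n - k.+1).+1 + A * s^`()).
by rewrite derivM deriv_exp exprS; move: (n - k.+1)%N => m; ring.
Qed.

Lemma root_pair_factor (R : numDomainType) (p : {poly R}) a :
  root p a -> root p (- a) -> a != 0 -> exists r, p = r * ('X ^+ 2 - (a ^+ 2)%:P).
Proof.
move=> /factor_theorem[q ->] pNa a_neq0.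
have /factor_theorem[r ->] : root q (- a).
  move: pNa; rewrite rootE hornerM !hornerE mulf_eq0 -opprD oppr_eq0 -mulr2n.
  by rewrite mulrn_eq0 /= (negbTE a_neq0) orbF.
exists r; rewrite -mulrA; congr (_ * _).
by rewrite polyCN rmorphXn /=; move: a%:P => A; ring.
Qed.

Lemma normr_horner_le (R : numDomainType) (p : {poly R}) (x : R) : `|x| <= 1 ->
  `|p.[x]| <= \sum_(i < size p) `|p`_i|.
Proof.
move=> x_le1; rewrite horner_coef (le_trans (ler_norm_sum _ _ _)) //.
by apply: ler_sum => i _; rewrite normrM normrX ler_piMr // exprn_ile1.
Qed.

Section FormalIntegral.
Variable R : numFieldType.

(* [int11 p] is the integral of [p] over [-1, 1], computed from the moments of
   the monomials so that it is a linear form on polynomials over any field. *)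
Definition moment11 (i : nat) : R := (1 - (-1) ^+ i.+1) / i.+1%:R.

Definition int11 (p : {poly R}) : R := \sum_(i < size p) p`_i * moment11 i.

Lemma int11E N (p : {poly R}) :
  (size p <= N)%N -> int11 p = \sum_(i < N) p`_i * moment11 i.
Proof.
move=> le_pN; rewrite /int11 -(subnKC le_pN) big_split_ord /=.
rewrite [X in _ + X]big1 ?addr0 // => i _.
by rewrite nth_default ?mul0r // leq_addr.
Qed.

Lemma int11_is_linear : scalar int11.
Proof.
move=> a p q; set N := maxn (size (a *: p + q)) (maxn (size p) (size q)).
rewrite !(@int11E N) ?leq_maxl //; last 2 first.
- by rewrite /N !leq_max leqnn !orbT.
- by rewrite /N !leq_max leqnn !orbT.
rewrite big_distrr -big_split /=; apply: eq_bigr => i _.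
by rewrite coefD coefZ mulrDl mulrA.
Qed.

HB.instance Definition _ :=
  GRing.isLinear.Build R {poly R} R *%R int11 int11_is_linear.

Lemma int11_1 : int11 1 = 2.
Proof. by rewrite /int11 size_poly1 big_ord1 coef1 mul1r /moment11 opprK divr1. Qed.

Lemma int11_deriv p : int11 p^`() = p.[1] - p.[-1].
Proof.
rewrite !horner_coef -sumrB; case size_p: (size p) => [|n].
  by move/eqP: size_p; rewrite size_poly_eq0 => /eqP->; rewrite deriv0 linear0 big_ord0.
have le_p'n : (size p^`() <= n)%N.
  by apply/leq_sizeP => j le_nj; rewrite coef_deriv nth_default ?mul0rn // size_p.
rewrite (int11E le_p'n) big_ord_recl /= !expr0 subrr add0r.
apply: eq_bigr => i _; rewrite coef_deriv /moment11 /bump /= expr1n add1n.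
by rewrite -mulr_natr; field; rewrite nat1r pnatr_eq0.
Qed.

Lemma int11_parts p q :
  int11 (p^`() * q) = (p * q).[1] - (p * q).[-1] - int11 (p * q^`()).
Proof. by rewrite -int11_deriv derivM linearD addrK. Qed.

End FormalIntegral.

Section RodriguesWeight.
Variable R : numFieldType.

Definition rodrigues (n : nat) : {poly R} := ('X ^+ 2 - 1) ^+ n.

Lemma rodrigues_monic n : rodrigues n \is monic.
Proof. by rewrite monic_exp // -polyC1 monicXnsubC. Qed.

Lemma size_rodrigues n : size (rodrigues n) = (n + n).+1.
Proof.
have := size_exp ('X ^+ 2 - 1 : {poly R}) n; rewrite -polyC1 size_XnsubC //=.
rewrite -/(rodrigues n) polySpred ?monic_neq0 ?rodrigues_monic //= => ->.
by rewrite mul2n addnn.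
Qed.

Lemma derivn_rodrigues_pm1 n k : (k < n)%N ->
  root (rodrigues n)^`(k) 1 && root (rodrigues n)^`(k) (-1).
Proof.
move=> lt_kn; have [s ->] := derivn_exp_factor ('X ^+ 2 - 1 : {poly R}) (ltnW lt_kn).
rewrite -(subnSK lt_kn) !rootE !hornerM !horner_exp !hornerE sqrrN expr1n subrr.
by rewrite expr0n !mul0r eqxx.
Qed.

Lemma int11_mul_derivn_rodrigues n j (q : {poly R}) : (j <= n)%N -> (size q <= j)%N ->
  int11 (q * (rodrigues n)^`(j)) = 0.
Proof.
elim: j q => [|j IHj] q le_jn le_qj.
  by move: le_qj; rewrite leqn0 size_poly_eq0 => /eqP->; rewrite mul0r linear0.
have /andP[/eqP w1 /eqP wN1] := derivn_rodrigues_pm1 le_jn.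
rewrite derivnS mulrC int11_parts !hornerM w1 wN1 !mul0r subrr sub0r mulrC.
rewrite IHj ?oppr0 ?(ltnW le_jn) //.
have [->|q_neq0] := eqVneq q 0; first by rewrite deriv0 size_poly0.
by rewrite -ltnS (leq_trans (lt_size_deriv q_neq0)).
Qed.

Lemma int11_Xn_derivn_rodrigues n j : (j <= n)%N ->
  int11 ('X ^+ j * (rodrigues n)^`(j)) = (-1) ^+ j * j`!%:R * int11 (rodrigues n).
Proof.
elim: j => [|j IHj] le_jn; first by rewrite !expr0 !mul1r.
have /andP[/eqP w1 /eqP wN1] := derivn_rodrigues_pm1 le_jn.
rewrite derivnS mulrC int11_parts !hornerM w1 wN1 !mul0r subrr sub0r.
rewrite derivXn /= mulrnAr -scaler_nat linearZ /= [_ * 'X^j]mulrC IHj ?(ltnW le_jn) //.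
by rewrite factS natrM exprS; ring.
Qed.

Lemma int11_rodriguesS n :
  int11 (rodrigues n.+1) * (n.*2 + 3)%:R = - (n.+1).*2%:R * int11 (rodrigues n).
Proof.
have XdW : 'X * (rodrigues n.+1)^`() = (n.+1).*2%:R *: (rodrigues n.+1 + rodrigues n).
  have dA : ('X ^+ 2 - 1 : {poly R})^`() = 'X *+ 2.
    by rewrite derivB derivXn derivC subr0 expr1.
  rewrite /rodrigues deriv_exp dA -mul_polyC rmorph_nat [_ ^+ n.+1]exprS -mul2n natrM.
  by move: (_ ^+ n) => B; ring.
have := int11_parts 'X (rodrigues n.+1).
have /andP[/eqP w1 /eqP wN1] := derivn_rodrigues_pm1 (ltn0Sn n).
rewrite derivn0 in w1 wN1.
rewrite derivX mul1r !hornerM w1 wN1 !mulr0 subrr sub0r XdW linearZ linearD /=.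
have -> : (n.*2 + 3)%:R = 1 + (n.+1).*2%:R :> R by rewrite nat1r doubleS addn3.
move: (int11 (rodrigues n.+1)) (int11 (rodrigues n)) => a b h.
by rewrite mulrDr mulr1 {1}h; ring.
Qed.

Lemma int11_rodrigues n :
  (-1) ^+ n * int11 (rodrigues n) * (n.*2.+1)`!%:R = 2 ^+ n.*2.+1 * (n`! ^ 2)%:R.
Proof.
elim: n => [|n IHn]; first by rewrite /rodrigues expr0 int11_1 mul1r mulr1.
move: (int11_rodriguesS n) IHn.
rewrite doubleS (factS n.*2.+2) (factS n.*2.+1) -!mul2n.
move: (int11 (rodrigues n.+1)) (int11 (rodrigues n)) ((2 * n).+1`!) => a b F hab IH.
transitivity ((-1) ^+ n.+1 * (a * (2 * n + 3)%:R) * ((2 * n).+2%:R * F%:R)).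
  by rewrite addn3 !natrM; ring.
rewrite hab; transitivity ((-1) ^+ n * b * F%:R * ((2 * n.+1)%:R * (2 * n).+2%:R)).
  by rewrite exprS; ring.
by rewrite IH factS !exprS; move: (n`!) => f; rewrite !natrM; ring.
Qed.

Lemma derivn_rodrigues_comp_opp n k :
  (rodrigues n)^`(k) \Po (- 'X) = (-1) ^+ k *: (rodrigues n)^`(k).
Proof.
elim: k => [|k IHk].
  by rewrite /rodrigues scale1r rmorphXn rmorphB /= rmorphXn /= comp_polyX rmorph1 sqrrN.
have := deriv_comp (rodrigues n)^`(k) (- 'X).
rewrite derivN derivX IHk derivZ mulrN1 derivnS => D.
by apply: oppr_inj; rewrite -D exprS mulN1r scaleNr opprK.
Qed.

End RodriguesWeight.

Section LegendrePolynomials.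
Variable R : realType.
Local Notation P := (Legendre R).
Local Notation rodrigues := (rodrigues R).

Lemma coef_Legendre n j :
  (P n)`_j = (2 ^+ n * n`!%:R)^-1 * ((rodrigues n)`_(n + j) *+ (n + j) ^_ n).
Proof. by rewrite coefZ coef_derivn. Qed.

Lemma coef_Legendre_n n : (P n)`_n = (2 ^+ n * n`!%:R)^-1 * ((n + n) ^_ n)%:R.
Proof.
move: (rodrigues_monic R n); rewrite coef_Legendre monicE lead_coefE size_rodrigues.
by move=> /eqP->.
Qed.

Lemma coef_Legendre_n_neq0 n : (P n)`_n != 0.
Proof.
rewrite coef_Legendre_n mulf_neq0 ?invr_eq0 ?mulf_neq0 ?expf_neq0 ?pnatr_eq0 //.
  by rewrite -lt0n fact_gt0.
by rewrite -lt0n ffact_gt0 leq_addr.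
Qed.

Lemma size_Legendre n : size (P n) = n.+1.
Proof.
apply/anti_leq/andP; split.
  apply/leq_sizeP => j lt_nj; rewrite coef_Legendre nth_default ?mul0rn ?mulr0 //.
  by rewrite size_rodrigues ltn_add2l.
by rewrite ltnNge; apply: contra (coef_Legendre_n_neq0 n) => /leq_sizeP->.
Qed.

Lemma Legendre_opp n x : (P n).[- x] = (-1) ^+ n * (P n).[x].
Proof.
transitivity ((P n \Po (- 'X)).[x]); first by rewrite horner_comp hornerN hornerX.
by rewrite comp_polyZ derivn_rodrigues_comp_opp scalerA !hornerZ mulrCA mulrA.
Qed.

Lemma int11_mul_Legendre n (q : {poly R}) : (size q <= n)%N -> int11 (q * P n) = 0.
Proof.
by move=> le_qn; rewrite -scalerAr linearZ /= int11_mul_derivn_rodrigues ?mulr0.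
Qed.

Lemma int11_Legendre_sqr n : int11 (P n * P n) = 2 / (2 * n%:R + 1).
Proof.
set a := (P n)`_n.
have size_rest : (size (P n - a *: 'X^n)%R <= n)%N.
  apply/leq_sizeP => j; rewrite leq_eqVlt => /predU1P[<-|lt_nj].
    by rewrite coefB [(_ *: 'X^n)`__]coefZ coefXn eqxx mulr1 subrr.
  rewrite coefB [(_ *: 'X^n)`__]coefZ coefXn gtn_eqF // mulr0 subr0.
  by rewrite nth_default // size_Legendre.
have -> : P n * P n = a *: ('X^n * P n) + (P n - a *: 'X^n) * P n.
  by rewrite scalerAl -mulrDl addrC subrK.
rewrite linearD linearZ /= (int11_mul_Legendre size_rest) addr0.
rewrite -scalerAr linearZ /= int11_Xn_derivn_rodrigues // /a coef_Legendre_n.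
have fact_neq0 k : k`!%:R != 0 :> R by rewrite pnatr_eq0 -lt0n fact_gt0.
rewrite [_ * n`!%:R * _]mulrAC.
have -> : (-1) ^+ n * int11 (rodrigues n) = 2 ^+ n.*2.+1 * (n`! ^ 2)%:R / (n.*2.+1)`!%:R.
  by rewrite -int11_rodrigues mulfK.
rewrite -addnn factS -(ffact_fact (leq_addr n n)) addnK exprS exprD !natrM.
rewrite (_ : (n + n).+1%:R = 2 * n%:R + 1 :> R); last by rewrite -natr1 addnn -mul2n natrM.
have F_neq0 : ((n + n) ^_ n)%:R != 0 :> R by rewrite pnatr_eq0 -lt0n ffact_gt0 leq_addr.
have N_neq0 : 2 * n%:R + 1 != 0 :> R by rewrite -(natrM _ 2) natr1 pnatr_eq0.
by field; rewrite fact_neq0 N_neq0 F_neq0 expf_neq0 ?pnatr_eq0.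
Qed.

Lemma int11_Legendre_mul n m :
  int11 (P n * P m) = if n == m then 2 / (2 * n%:R + 1) else 0.
Proof.
have [<-|] := eqVneq n m; first exact: int11_Legendre_sqr.
case: ltngtP => // [lt_nm|lt_mn] _.
  by rewrite int11_mul_Legendre // size_Legendre.
by rewrite mulrC int11_mul_Legendre // size_Legendre.
Qed.

Lemma Legendre_span N (p : {poly R}) : (size p <= N)%N ->
  exists b : nat -> R, p = \sum_(i < N) b i *: P i.
Proof.
elim: N p => [|N IHN] p le_pN.
  by exists (fun=> 0); move: le_pN; rewrite size_poly_leq0 big_ord0 => /eqP.
set c := p`_N / (P N)`_N.
have /IHN [b Eb] : (size (p - c *: P N)%R <= N)%N.
  apply/leq_sizeP => j; rewrite leq_eqVlt => /predU1P[<-|lt_Nj].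
    by rewrite coefB coefZ divfK ?coef_Legendre_n_neq0 // subrr.
  rewrite coefB coefZ !nth_default ?mulr0 ?subr0 ?size_Legendre //.
  exact: leq_trans lt_Nj.
exists (fun i => if i == N then c else b i).
rewrite big_ord_recr /= eqxx -[p](subrK (c *: P N)) Eb; congr (_ + _).
by apply: eq_bigr => i _; rewrite ltn_eqF.
Qed.

Lemma scalar_mul_Legendre_sums (F : {scalar {poly R}}) N (k : nat -> R) :
  (forall n m, (n < N)%N -> (m < N)%N -> F (P n * P m) = if n == m then k n else 0) ->
  forall b e : nat -> R, F ((\sum_(i < N) b i *: P i) * (\sum_(i < N) e i *: P i)) =
  \sum_(i < N) b i * e i * k i.
Proof.
move=> FP b e; rewrite mulr_suml linear_sum; apply: eq_bigr => i _.
rewrite mulr_sumr linear_sum (bigD1 i) //= big1 ?addr0 => [|j neq_ji].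
  by rewrite -scalerAl -scalerAr !linearZ /= FP // eqxx mulrA.
by rewrite -scalerAl -scalerAr !linearZ /= FP // ifN ?mulr0 // eq_sym; exact: neq_ji.
Qed.

Variables (d : nat) (F : {scalar {poly R}}).
Hypothesis F_Legendre : forall n m, (n <= d)%N -> (m <= d)%N ->
  F (P n * P m) = if n == m then (2 * n%:R + 1)^-1 else 0.

Lemma scalar_mul_int11 (p q : {poly R}) : (size p <= d.+1)%N -> (size q <= d.+1)%N ->
  F (p * q) = int11 (p * q) / 2.
Proof.
move=> /Legendre_span[b ->] /Legendre_span[e ->].
rewrite (scalar_mul_Legendre_sums (N := d.+1) F_Legendre).
rewrite (scalar_mul_Legendre_sums (k := fun n => 2 / (2 * n%:R + 1))); last first.
  by move=> n m _ _; rewrite /= int11_Legendre_mul.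
by rewrite mulr_suml; apply: eq_bigr => i _; field; rewrite -(natrM _ 2) natr1 pnatr_eq0.
Qed.

Lemma scalar_sqr_gt0 (p : {poly R}) : p != 0 -> (size p <= d.+1)%N -> 0 < F (p * p).
Proof.
move=> p_neq0 /Legendre_span[b Ep].
rewrite Ep (scalar_mul_Legendre_sums (N := d.+1) F_Legendre).
have [i bi_neq0] : exists i : 'I_d.+1, b i != 0.
  apply/existsP; apply: contraNT p_neq0; rewrite negb_exists Ep => /forallP b0.
  by apply/eqP/big1 => i _; rewrite (eqP (negbNE (b0 i))) scale0r.
have N_gt0 (j : nat) : 0 < 2 * j%:R + 1 :> R by rewrite -(natrM _ 2) natr1 ltr0n.
rewrite (bigD1 i) //=; apply: ltr_pwDl.
  by rewrite -expr2 mulr_gt0 ?invr_gt0 // lt0r sqr_ge0 sqrf_eq0 bi_neq0.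
by apply: sumr_ge0 => j _; rewrite -expr2 mulr_ge0 ?sqr_ge0 // invr_ge0 ltW.
Qed.

Lemma scalar_Legendre_factor r a : P d.+1 = r * ('X ^+ 2 - a%:P) ->
  F (r * r * ('X ^+ 2 - a%:P)) = 0 /\ 0 < F (r * r).
Proof.
move=> Pr; have r_neq0 : r != 0.
  by apply: contra_eq_neq Pr => ->; rewrite mul0r -size_poly_eq0 size_Legendre.
have size_r : (size r <= d)%N.
  move: (size_Legendre d.+1); rewrite Pr size_Mmonic ?monicXnsubC //.
  by rewrite size_XnsubC // addn3 => -[->].
split; last by rewrite scalar_sqr_gt0 // (leq_trans size_r).
have size_Xr : (size ('X * r)%R <= d.+1)%N by rewrite mulrC size_mulX.
have E : r * r * ('X ^+ 2 - a%:P) = ('X * r) * ('X * r) - a *: (r * r).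
  by rewrite -mul_polyC; move: a%:P 'X => A X; ring.
have : int11 (r * r * ('X ^+ 2 - a%:P)) = 0.
  by rewrite -mulrA -Pr int11_mul_Legendre // (leq_trans size_r).
rewrite E [int11 _]linearB [F _]linearB /= [int11 (_ *: _)]linearZ [F (_ *: _)]linearZ /=.
rewrite !scalar_mul_int11 ?(leq_trans size_r) //.
by rewrite [a * (_ / _)]mulrA -mulrBl => ->; rewrite mul0r.
Qed.

End LegendrePolynomials.

Lemma ler_cos (R : realType) : {in `[0, pi] &, {mono (@cos R) : x y /~ x <= y}}.
Proof. by apply: le_nmono_in => x y x0pi y0pi lt_xy; rewrite ltr_cos. Qed.

Lemma rect_cos_bound (R : realType) (x z : R) (q0 : R * R) :
  acos `|x| < z -> rect z q0 ->
  exists2 c : R, 0 <= c < `|x| & forall q, rect z q -> `|cos q.1| <= c.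
Proof.
move=> lt_z [/andP[z_le z_ge] _]; have pi_gt0 := @pi_gt0 R.
have [x_le1|x_gt1] := lerP `|x| 1; last first.
  (* here [acos `|x|] is a junk value, but c = 1 already works *)
  by exists 1 => [|q _]; rewrite ?ler01 ?x_gt1 ?cos_max.
have x_in : -1 <= `|x| <= 1 by rewrite x_le1 andbT (le_trans _ (normr_ge0 x)) ?lerN10.
have acos_ge0 := acos_ge0 x_in.
have acos_in : acos `|x| \in `[0, pi] by rewrite in_itv /= acos_ge0 acos_lepi.
have z_in : z \in `[0, pi] by rewrite in_itv /=; apply/andP; split; lra.
exists (cos z).
  rewrite cos_ge0_pihalf /=; last by apply/andP; split; lra.
  by rewrite -[X in _ < X]acosK ?in_itv // ltr_cos.
move=> q [/andP[z_q q_z] _]; have q_in : q.1 \in `[0, pi].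
  by rewrite in_itv /=; apply/andP; split; lra.
have piBz_in : pi - z \in `[0, pi] by rewrite in_itv /=; apply/andP; split; lra.
rewrite ler_norml (_ : - cos z = cos (pi - z)); last first.
  by rewrite cosB cospi sinpi mul0r addr0 mulN1r.
by rewrite !ler_cos // q_z z_q.
Qed.

Lemma measurable_rect (R : realType) (z : R) : measurable (rect z).
Proof.
have -> : rect z = `[z, pi - z] `*` `]- pi, pi].
  by apply/seteqP; split => -[a b]; rewrite /rect /= !in_itv.
by apply: measurableX; apply: measurable_itv.
Qed.

Lemma design_on_neq0 (R : realType) (A : set (R * R)) xi : design_on A xi -> A != set0.
Proof.
rewrite /design_on => xiA; apply/eqP => A0; move: xiA.
by rewrite A0 measure0 => /esym/eqP; rewrite onee_eq0.
Qed.

Lemma idx_n_zonal d n : (n <= d)%N -> idx_n d (n ^ 2 + n) = n.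
Proof.
move=> le_nd; apply/anti_leq/andP; split.
  by apply/bigmax_leqP => i le_i; nia.
by apply: (@leq_bigmax_cond _ _ _ (Ordinal (le_nd : n < d.+1)%N)) => /=; rewrite leq_addr.
Qed.

Lemma zonal_index_subproof d n : (n <= d)%N -> (n ^ 2 + n < d.+1 ^ 2)%N.
Proof. by move=> le_nd; nia. Qed.

Definition zonal_index d n (le_nd : (n <= d)%N) : 'I_(d.+1 ^ 2) :=
  Ordinal (zonal_index_subproof le_nd).

Lemma fvec_zonal_index (R : realType) d n (le_nd : (n <= d)%N) (p : R * R) :
  fvec (zonal_index le_nd) p = Num.sqrt (2 * n%:R + 1) * (Legendre R n).[cos p.1].
Proof. by rewrite /fvec /= /idx_m idx_n_zonal // subrr /Ynm eqxx. Qed.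

Section CosineMoments.
Variables (R : realType) (xi : probability (R * R)%type R).

Lemma measurable_horner_cos (p : {poly R}) :
  measurable_fun setT (fun q : R * R => p.[cos q.1]).
Proof.
apply: (@measurableT_comp _ _ _ _ _ _ (horner p) _ (cos \o fst)).
  exact: continuous_measurable_fun (@continuous_horner R p).
apply: (@measurableT_comp _ _ _ _ _ _ cos _ fst) => //.
exact: continuous_measurable_fun (@continuous_cos R).
Qed.

Lemma integrable_horner_cos (p : {poly R}) :
  xi.-integrable setT (EFin \o (fun q : R * R => p.[cos q.1])).
Proof.
apply: measurable_bounded_integrable => //.
- exact: le_lt_trans (probability_le1 xi measurableT) (ltry _).
- exact: measurable_horner_cos.
exists (\sum_(i < size p) `|p`_i|); split; first exact: num_real.
move=> M lt_M q _ /=; apply: le_trans (ltW lt_M).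
exact/normr_horner_le/cos_max.
Qed.

Definition cos_moment (p : {poly R}) : R :=
  Rintegral xi setT (fun q => p.[cos q.1]).

Lemma cos_moment_is_linear : scalar cos_moment.
Proof.
move=> a p q; rewrite /cos_moment.
under eq_Rintegral do rewrite hornerD.
rewrite RintegralD ?integrable_horner_cos //.
under eq_Rintegral do rewrite hornerZ.
by rewrite RintegralZl ?integrable_horner_cos.
Qed.

HB.instance Definition _ :=
  GRing.isLinear.Build R {poly R} R *%R cos_moment cos_moment_is_linear.

Lemma cos_moment_ge0 (A : set (R * R)) p : measurable A -> xi A = 1%E ->
  (forall q, A q -> 0 <= p.[cos q.1]) -> 0 <= cos_moment p.
Proof.
move=> mA xiA p_ge0; rewrite /cos_moment /Rintegral.
have xiAC : xi (~` A) = 0%E by rewrite probability_setC // xiA subee.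
rewrite (negligible_integral (measurableC mA) _ _ xiAC) ?integrable_horner_cos //.
apply/fine_ge0/integral_ge0 => q [_ /=]; rewrite lee_fin.
by move/contrapT; apply: p_ge0.
Qed.

Lemma cos_moment_Legendre_mul d : info_matrix d xi = 1%:M ->
  forall n m, (n <= d)%N -> (m <= d)%N ->
  cos_moment (Legendre R n * Legendre R m) = if n == m then (2 * n%:R + 1)^-1 else 0.
Proof.
move=> xiM n m le_nd le_md.
have := congr1 (fun M : 'M[R]_(d.+1 ^ 2) => M (zonal_index le_nd) (zonal_index le_md)) xiM.
rewrite !mxE /=; under eq_Rintegral do rewrite !fvec_zonal_index mulrACA -hornerM.
rewrite RintegralZl ?integrable_horner_cos // -/(cos_moment _).
have -> : (zonal_index le_nd == zonal_index le_md) = (n == m).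
  apply/eqP/eqP => [[]|eq_nm]; first by nia.
  by apply: val_inj; rewrite /= eq_nm.
have N_gt0 k : 0 < 2 * k%:R + 1 :> R by rewrite -(natrM _ 2) natr1 ltr0n.
have [<-|neq_nm] := eqVneq n m.
  rewrite -expr2 sqr_sqrtr ?ltW //.
  by move/(canRL (mulKf (lt0r_neq0 (N_gt0 n)))); rewrite mulr1.
have sqrt_neq0 k : Num.sqrt (2 * k%:R + 1) != 0 :> R by rewrite gt_eqF ?sqrtr_gt0.
by move/eqP; rewrite !mulf_eq0 !(negbTE (sqrt_neq0 _)) => /eqP.
Qed.

End CosineMoments.

Theorem theorem3p6 (R : realType) (d : nat) (x1 : R)
  (hroot : root (Legendre R d.+1) x1)
  (hmin : forall r : R, root (Legendre R d.+1) r -> x1 <= r)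
  (z : R) (hz : acos `|x1| < z) :
  ~ exists xi : probability (R * R)%type R,
      design_on (rect z) xi /\ info_matrix d xi = 1%:M.
Proof.
move=> [xi [xi_rect xiM]].
have /set0P[q0 rect_q0] := design_on_neq0 xi_rect.
have [c /andP[c_ge0 lt_cx] cos_le] := rect_cos_bound hz rect_q0.
have x1_neq0 : x1 != 0 by rewrite -normr_gt0 (le_lt_trans c_ge0).
have [r Pr] : exists r, Legendre R d.+1 = r * ('X ^+ 2 - (x1 ^+ 2)%:P).
  by apply: root_pair_factor x1_neq0 => //; rewrite rootE Legendre_opp (rootP hroot) mulr0.
have [node_eq0 rr_gt0] := scalar_Legendre_factor (cos_moment_Legendre_mul xiM) Pr.
have : 0 <= cos_moment xi (r * r * ((c ^+ 2)%:P - 'X ^+ 2)).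
  apply: cos_moment_ge0 (measurable_rect z) xi_rect _ => q /cos_le cos_le_c.
  rewrite !hornerE -expr2 mulr_ge0 ?sqr_ge0 // subr_ge0 -real_normK ?num_real //.
  by rewrite ler_sqr ?nnegrE.
have -> : r * r * ((c ^+ 2)%:P - 'X ^+ 2) =
    (c ^+ 2 - x1 ^+ 2) *: (r * r) - r * r * ('X ^+ 2 - (x1 ^+ 2)%:P).
  by rewrite -mul_polyC rmorphB /=; move: (c ^+ 2)%:P (x1 ^+ 2)%:P 'X => C X1 X; ring.
rewrite [cos_moment _ (_ - _)]linearB /= [cos_moment _ (_ *: _)]linearZ /= node_eq0 subr0.
rewrite pmulr_lge0 // subr_ge0 -[x1 ^+ 2]real_normK ?num_real // ler_sqr ?nnegrE //.
by rewrite leNgt lt_cx.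
Qed.
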